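(* Let $(A,\boxplus,0)$ be a mosaic satisfying (Lms1) $0,x\in x\boxplus x$ for all $x\in A$ and (Lms2) $(x\boxplus x)\boxplus(x\boxplus x)=x\boxplus x$ for all $x\in A$. Then for every $x\in A$, $A_x:=x\boxplus x$ is a strong submosaic of $A$. Moreover, for any strong submosaic $B$ of $A$, \[ B=\bigcup_{x\in B}A_x=\bigcup_{x\in B}B_x, \] where $B_x:=(x\boxplus x)\cap B$.
   Context: A multioperation on $A$ is a function $\boxplus:A\times A\to\wp(A)$; for subsets, $X\boxplus Y:=\bigcup_{x\in X,y\in Y}x\boxplus y$. A mosaic $(A,\boxplus,e)$ is a set with a multioperation with neutral element $e$ ($e\boxplus x=x\boxplus e=\{x\}$) that is $\rho$-reversible for some endofunction $\rho$ ($z\in x\boxplus y$ implies $x\in z\boxplus\rho(y)$ and $y\in\rho(x)\boxplus z$). A submosaic is a subset $B\ni e$ such that, with the induced multioperation $x\boxplus_B y:=(x\boxplus y)\cap B$, the inclusion $B\to A$ is an embedding of magmata and $(B,\boxplus_B,e)$ is a mosaic; it is a strong submosaic if moreover the inclusion is a strong morphism, i.e. $x\boxplus y\subseteq B$ for all $x,y\in B$. *)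

Set Implicit Arguments.

(* A multioperation on A: [op x y z] means z \in x [+] y. *)
Definition multiop (A : Type) := A -> A -> A -> Prop.

Definition is_mosaic (A : Type) (op : multiop A) (e : A) : Prop :=
  (forall x z, op e x z <-> z = x) /\
  (forall x z, op x e z <-> z = x) /\
  exists rho : A -> A, forall x y z,
    op x y z -> op z (rho y) x /\ op (rho x) z y.

Definition magma_morphism (B A : Type) (opB : multiop B) (opA : multiop A)
  (f : B -> A) : Prop :=
  forall x y z, opB x y z -> opA (f x) (f y) (f z).

Definition magma_embedding (B A : Type) (opB : multiop B) (opA : multiop A)
  (f : B -> A) : Prop :=
  (forall x y, f x = f y -> x = y) /\
  forall x y z, opB x y z <-> opA (f x) (f y) (f z).

Definition strong_morphism (B A : Type) (opB : multiop B) (opA : multiop A)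
  (f : B -> A) : Prop :=
  magma_morphism opB opA f /\
  forall x y w, opA (f x) (f y) w -> exists z, w = f z /\ opB x y z.

Definition subT (A : Type) (B : A -> Prop) := {x : A | B x}.
Definition induced_op (A : Type) (op : multiop A) (B : A -> Prop)
  : multiop (subT B) :=
  fun x y z => op (proj1_sig x) (proj1_sig y) (proj1_sig z).

Definition submosaic (A : Type) (op : multiop A) (e : A) (B : A -> Prop) : Prop :=
  exists He : B e,
    magma_embedding (@induced_op A op B) op (@proj1_sig A B) /\
    is_mosaic (@induced_op A op B) (exist B e He : subT B).

Definition strong_submosaic (A : Type) (op : multiop A) (e : A) (B : A -> Prop)
  : Prop :=
  submosaic op e B /\ strong_morphism (@induced_op A op B) op (@proj1_sig A B).

(* Since 0 ∈ y ⊞ y, reversibility gives y ∈ 0 ⊞ ρ(y) = {ρ(y)}, so the only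
   reversing map is the identity; it therefore restricts to every subset
   containing 0, and every such subset is a submosaic.  A submosaic is strong
   exactly when it is closed under ⊞, which (Lms2) holds for x ⊞ x.  Finally
   x ∈ x ⊞ x puts every element of a closed set B into some B_x, while closure
   keeps every A_x with x ∈ B inside B. *)

From Stdlib Require Import Setoid ProofIrrelevance.

Set Implicit Arguments.

Section InducedMosaic.

Variables (A : Type) (op : multiop A) (e : A).

Definition op_closed (B : A -> Prop) : Prop :=
  forall x y w, B x -> B y -> op x y w -> B w.

Definition id_reversible : Prop :=
  forall x y z, op x y z -> op z y x /\ op x z y.

Lemma subT_inj (B : A -> Prop) (x y : subT B) : proj1_sig x = proj1_sig y -> x = y.
Proof. exact (eq_sig_hprop (fun w => proof_irrelevance (B w)) x y). Qed.

Lemma mosaic_id_reversible :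
  is_mosaic op e -> (forall y, op y y e) -> id_reversible.
Proof.
  intros [Hl [_ [rho Hrho]]] Hsq.
  assert (Hrho_id : forall y, rho y = y).
  { intro y. destruct (Hrho y y e (Hsq y)) as [Hy _].
    symmetry; exact (proj1 (Hl _ _) Hy). }
  intros x y z Hxyz. destruct (Hrho x y z Hxyz) as [Hzyx Hxzy].
  rewrite Hrho_id in Hzyx, Hxzy. split; assumption.
Qed.

Lemma proj1_sig_embedding (B : A -> Prop) :
  magma_embedding (@induced_op A op B) op (@proj1_sig A B).
Proof. split; [exact (@subT_inj B) | reflexivity]. Qed.

Lemma induced_is_mosaic (B : A -> Prop) (He : B e) :
  is_mosaic op e -> id_reversible ->
  is_mosaic (@induced_op A op B) (exist B e He).
Proof.
  intros [Hl [Hr _]] Hrev. unfold induced_op; simpl.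
  split; [| split].
  - intros x z. rewrite Hl. split; [apply subT_inj | intros ->; reflexivity].
  - intros x z. rewrite Hr. split; [apply subT_inj | intros ->; reflexivity].
  - exists (fun x => x). intros x y z. apply Hrev.
Qed.

Lemma strong_inclusion_iff_closed (B : A -> Prop) :
  strong_morphism (@induced_op A op B) op (@proj1_sig A B) <-> op_closed B.
Proof.
  split.
  - intros [_ Hstrong] x y w Bx By Hw.
    destruct (Hstrong (exist B x Bx) (exist B y By) w Hw) as [z [-> _]].
    exact (proj2_sig z).
  - intros Hcl. split; [intros x y z Hz; exact Hz |].
    intros [x Bx] [y By] w Hw.
    exists (exist B w (Hcl x y w Bx By Hw)). split; [reflexivity | exact Hw].
Qed.

Lemma strong_submosaic_of_closed (B : A -> Prop) :
  is_mosaic op e -> id_reversible -> B e -> op_closed B ->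
  strong_submosaic op e B.
Proof.
  intros Hmos Hrev He Hcl. split.
  - exists He. split; [apply proj1_sig_embedding | exact (induced_is_mosaic B He Hmos Hrev)].
  - exact (proj2 (strong_inclusion_iff_closed B) Hcl).
Qed.

Lemma closed_eq_union_squares (B : A -> Prop) :
  (forall x, op x x x) -> op_closed B ->
  forall w, B w <-> exists x, B x /\ op x x w.
Proof.
  intros Hidem Hcl w. split.
  - intro Bw. exists w. split; [exact Bw | exact (Hidem w)].
  - intros [x [Bx Hw]]. exact (Hcl x x w Bx Bx Hw).
Qed.

End InducedMosaic.

Theorem mainTheorem11 (A : Type) (op : multiop A) (zero : A)
  (Hmos : is_mosaic op zero)
  (Lms1 : forall x, op x x zero /\ op x x x)
  (Lms2 : forall x w,
      (exists a b, op x x a /\ op x x b /\ op a b w) <-> op x x w) :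
  (forall x, strong_submosaic op zero (fun w => op x x w)) /\
  (forall B : A -> Prop, strong_submosaic op zero B ->
     forall w,
       (B w <-> exists x, B x /\ op x x w) /\
       (B w <-> exists x, B x /\ (op x x w /\ B w))).
Proof.
  assert (Hrev : id_reversible op) by (apply (mosaic_id_reversible Hmos); apply Lms1).
  assert (Hidem : forall x, op x x x) by apply Lms1.
  split.
  - intro x. apply strong_submosaic_of_closed; [exact Hmos | exact Hrev | apply Lms1 |].
    intros a b w Ha Hb Hw. apply Lms2. exists a, b. auto.
  - intros B [_ Hstrong] w.
    apply strong_inclusion_iff_closed in Hstrong.
    split; [exact (closed_eq_union_squares Hidem Hstrong w) |].
    split.
    + intro Bw. exists w. auto.
    + intros [_ [_ [_ Bw]]]. exact Bw.
Qed.
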